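(* Let $\mathcal{A}$ be a Banach algebra such that $\mathrm{rad}(\mathcal{A})=\mathrm{rann}(\mathcal{A})$ and $\mathcal{A}/\mathrm{rad}(\mathcal{A})$ is commutative. Let $T$ be a left multiplier of $\mathcal{A}$. Then $T(\mathcal{A})\subseteq\mathrm{rad}(\mathcal{A})$ if and only if $T$ is spectrally infinitesimal.
   Context: $\mathrm{rad}(\mathcal{A})$ is the Jacobson radical and $\mathrm{rann}(\mathcal{A})=\{c\in\mathcal{A}: ac=0\ \forall a\in\mathcal{A}\}$. A left multiplier is a linear map $T:\mathcal{A}\to\mathcal{A}$ with $T(ab)=T(a)b$ for all $a,b$. $T$ is spectrally infinitesimal if $r(T(a))=0$ for all $a\in\mathcal{A}$, $r$ the spectral radius. *)

From mathcomp Require Import all_boot all_algebra.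
From mathcomp Require Import all_classical all_reals all_analysis.
From mathcomp.real_closed Require Import complex.
Import numFieldNormedType.Exports.

Set Implicit Arguments.
Unset Strict Implicit.
Unset Printing Implicit Defensive.

Local Open Scope classical_set_scope.
Local Open Scope ring_scope.

Section BanachAlgebra.
Variable R : realType.
Variable V : completeNormedModType R[i].
Variable mul : V -> V -> V.

Definition banach_algebra_mul : Prop :=
  [/\ (forall a b c, mul a (mul b c) = mul (mul a b) c),
      (forall a b c, mul (a + b) c = mul a c + mul b c),
      (forall a b c, mul a (b + c) = mul a b + mul a c),
      (forall (k : R[i]) a b, mul (k *: a) b = k *: mul a b)
    & (forall (k : R[i]) a b, mul a (k *: b) = k *: mul a b)] /\
  (forall a b, `|mul a b| <= `|a| * `|b|).

(* Quasi-invertibility (invertibility of 1 - a in the unitization). *)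
Definition quasi_invertible (a : V) : Prop :=
  exists b : V, a + b - mul a b = 0 /\ a + b - mul b a = 0.

(* Spectrum of a, computed in the unitization A^# = A + C1:
   lambda is in the spectrum iff lambda 1 - a is not invertible in A^#;
   for lambda <> 0 this means lambda^-1 a is not quasi-invertible,
   and 0 always belongs to the spectrum in A^#. *)
Definition spectrum (a : V) : set R[i] :=
  [set lam | lam = 0 \/ ~ quasi_invertible (lam^-1 *: a)].

Definition spectral_radius (a : V) : \bar R :=
  ereal_sup [set (Normc.normc lam)%:E | lam in spectrum a].

Definition left_ideal (L : set V) : Prop :=
  [/\ L 0,
      (forall x y, L x -> L y -> L (x + y)),
      (forall (k : R[i]) x, L x -> L (k *: x))
    & (forall a x, L x -> L (mul a x))].

Definition modular_left_ideal (L : set V) : Prop :=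
  left_ideal L /\ exists u : V, forall a, L (a - mul a u).

Definition maximal_modular_left_ideal (L : set V) : Prop :=
  [/\ modular_left_ideal L, L != setT &
      forall J : set V, left_ideal J -> L `<=` J -> J != setT -> J = L].

(* Jacobson radical: intersection of all maximal modular left ideals
   (= the whole algebra if there are none). *)
Definition jacobson_radical : set V :=
  [set a | forall L, maximal_modular_left_ideal L -> L a].

Definition rann : set V := [set c | forall a, mul a c = 0].

(* A / rad(A) is commutative: all commutators lie in rad(A). *)
Definition quotient_by_rad_commutative : Prop :=
  forall a b, jacobson_radical (mul a b - mul b a).

Definition left_multiplier (T : V -> V) : Prop :=
  [/\ (forall x y, T (x + y) = T x + T y),
      (forall (k : R[i]) x, T (k *: x) = k *: T x)
    & (forall a b, T (mul a b) = mul (T a) b)].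

Definition spectrally_infinitesimal (T : V -> V) : Prop :=
  forall a, spectral_radius (T a) = 0%E.

End BanachAlgebra.

(* If T(A) lies in rad(A) = rann(A), each T a squares to zero, and a
   square-zero element a is quasi-nilpotent: -k a is the quasi-inverse of k a
   for every scalar k.
   Conversely, if every T b has spectral radius 0, every T b is quasi-invertible;
   since T(a x) = T(a) x, Jacobson's swap shows that every x T(a) is left
   quasi-invertible, and an element all of whose left multiples are left
   quasi-invertible lies in every maximal modular left ideal L: otherwise
   maximality gives L + A x0 T(a) = A for some x0, so the modular unit u is
   l + x T(a), and the left quasi-inverse of x T(a) puts u, hence A, in L. *)
From mathcomp Require Import all_boot all_algebra.
From mathcomp Require Import all_classical all_reals all_analysis.
From mathcomp.real_closed Require Import complex.
Import numFieldNormedType.Exports.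
Import GRing.Theory Num.Theory.

Set Implicit Arguments.
Unset Strict Implicit.
Unset Printing Implicit Defensive.
Local Open Scope classical_set_scope.
Local Open Scope ring_scope.

Section ComplexAlgebra.
Variables (R : realType) (V : completeNormedModType R[i]) (mul : V -> V -> V).
Hypothesis mulA : forall a b c, mul a (mul b c) = mul (mul a b) c.
Hypothesis mulDl : forall a b c, mul (a + b) c = mul a c + mul b c.
Hypothesis mulDr : forall a b c, mul a (b + c) = mul a b + mul a c.
Hypothesis mulZl : forall (k : R[i]) a b, mul (k *: a) b = k *: mul a b.
Hypothesis mulZr : forall (k : R[i]) a b, mul a (k *: b) = k *: mul a b.

Lemma mul0v a : mul 0 a = 0.
Proof. by apply: (addrI (mul 0 a)); rewrite -mulDl !addr0. Qed.

Lemma mulv0 a : mul a 0 = 0.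
Proof. by apply: (addrI (mul a 0)); rewrite -mulDr !addr0. Qed.

Lemma mulNv a b : mul (- a) b = - mul a b.
Proof. by apply: (addrI (mul a b)); rewrite -mulDl !subrr mul0v. Qed.

Lemma mulvN a b : mul a (- b) = - mul a b.
Proof. by apply: (addrI (mul a b)); rewrite -mulDr !subrr mulv0. Qed.

Lemma mulBv a b c : mul (a - b) c = mul a c - mul b c.
Proof. by rewrite mulDl mulNv. Qed.

Lemma mulvB a b c : mul a (b - c) = mul a b - mul a c.
Proof. by rewrite mulDr mulvN. Qed.

Lemma quasi_invertible_square0 a : mul a a = 0 -> quasi_invertible mul a.
Proof.
by move=> a0; exists (- a); rewrite mulvN mulNv a0 oppr0 subr0 subrr.
Qed.

Lemma spectrum_square0 a : mul a a = 0 -> spectrum mul a = [set 0].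
Proof.
move=> a0; apply/seteqP; split=> lam /=; last by move->; left.
case=> // nqi; exfalso; apply/nqi/quasi_invertible_square0.
by rewrite mulZl mulZr a0 !scaler0.
Qed.

Lemma spectral_radius_square0 a : mul a a = 0 -> spectral_radius mul a = 0%E.
Proof.
move=> a0; rewrite /spectral_radius spectrum_square0 //.
by rewrite image_set1 Normc.normc0 ereal_sup1.
Qed.

Lemma quasi_invertible_of_spectral_radius0 a :
  spectral_radius mul a = 0%E -> quasi_invertible mul a.
Proof.
move=> ra0; apply: contrapT => nqi.
have : ((Normc.normc (1 : R[i]))%:E <= spectral_radius mul a)%E.
  by apply: ereal_sup_ubound; exists 1 => //; right; rewrite invr1 scale1r.
by rewrite ra0 Normc.normc1 lee_fin ler10.
Qed.

Definition left_quasi_invertible (a : V) : Prop :=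
  exists b : V, b + a - mul b a = 0.

(* Jacobson's lemma: in the unitization, 1 - y x invertible implies 1 - x y
   left invertible. *)
Lemma quasi_invertible_mul_swap x y :
  quasi_invertible mul (mul y x) -> left_quasi_invertible (mul x y).
Proof.
move=> [e [_ eyx]]; exists (mul x (mul e y) - mul x y).
have : mul x (mul (e + mul y x - mul e (mul y x)) y) = 0.
  by rewrite [e + _]addrC eyx mul0v mulv0.
rewrite !mulBv !mulDl !mulvB !mulDr -!mulA => xey.
by rewrite subrK opprB addrA.
Qed.

Section MaximalModularLeftIdeal.
Variables (L : set V) (u : V).
Hypothesis idealL : left_ideal mul L.
Hypothesis modular_u : forall a, L (a - mul a u).
Hypothesis properL : L != setT.
Hypothesis maximalL :
  forall J, left_ideal mul J -> L `<=` J -> J != setT -> J = L.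

Lemma not_all_mul_unit : ~ (forall z, L (mul z u)).
Proof.
case: idealL => _ LD _ _ Lzu; move/eqP: properL; apply.
apply/seteqP; split=> // z _; rewrite -(subrK (mul z u) z).
exact: LD.
Qed.

Lemma maximal_eq_of_notin_unit J :
  left_ideal mul J -> L `<=` J -> ~ J u -> J = L.
Proof.
move=> idealJ LJ nJu; apply: maximalL => //.
by apply/eqP => JT; apply: nJu; rewrite JT.
Qed.

Lemma mem_of_left_multiples c : (forall x, L (mul x c)) -> L c.
Proof.
case: idealL => L0 LD LZ LM Lxc.
pose J := [set z | forall x, L (mul x z)].
suff <- : J = L by [].
apply: maximal_eq_of_notin_unit; last exact: not_all_mul_unit.
- split=> [x | p q Jp Jq x | k p Jp x | w p Jp x].
  + by rewrite mulv0.
  + by rewrite mulDr; apply: LD.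
  + by rewrite mulZr; apply: LZ.
  + by rewrite mulA.
- by move=> z Lz x; apply: LM.
Qed.

Lemma unit_decomposition c x0 :
  ~ L (mul x0 c) -> exists l x, L l /\ u = l + mul x c.
Proof.
case: idealL => L0 LD LZ LM nLx0c.
pose K := [set z | exists l x, L l /\ z = l + mul x c].
have LK : L `<=` K by move=> z Lz; exists z, 0; rewrite mul0v addr0.
apply: contrapT => nKu; apply: nLx0c.
suff <- : K = L by exists 0, x0; rewrite add0r.
apply: maximal_eq_of_notin_unit LK nKu.
split.
- by exists 0, 0; rewrite mul0v addr0.
- move=> _ _ [l1 [x1 [L1 ->]]] [l2 [x2 [L2 ->]]].
  by exists (l1 + l2), (x1 + x2); rewrite mulDl addrACA; split=> //; apply: LD.
- move=> k _ [l [x [Ll ->]]].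
  by exists (k *: l), (k *: x); rewrite mulZl scalerDr; split=> //; apply: LZ.
- move=> w _ [l [x [Ll ->]]].
  by exists (mul w l), (mul w x); rewrite mulDr mulA; split=> //; apply: LM.
Qed.

Lemma unit_mem_of_left_quasi_invertible l c :
  L l -> left_quasi_invertible c -> u = l + c -> L u.
Proof.
case: idealL => _ LD LZ LM Ll [b /eqP]; rewrite subr_eq0 => /eqP bc Eu.
have LN x : L x -> L (- x) by rewrite -scaleN1r; apply: LZ.
(* u = (l - b l) - (b - b u), both terms lying in L *)
have -> : u = l - mul b l - (b - mul b u).
  rewrite Eu mulDr -bc opprB (addrC b c) [mul b l + _]addrA addrK.
  by rewrite addrA subrK.
by apply: (LD); [apply: (LD) => //; apply/LN/LM | apply/LN/modular_u].
Qed.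

Lemma mem_of_left_quasi_invertible c :
  (forall x, left_quasi_invertible (mul x c)) -> L c.
Proof.
move=> lqi; apply: mem_of_left_multiples => x0; apply: contrapT => nLx0c.
have [l [x [Ll Eu]]] := unit_decomposition nLx0c.
have Lu := unit_mem_of_left_quasi_invertible Ll (lqi x) Eu.
by apply: not_all_mul_unit => z; case: idealL => _ _ _; apply.
Qed.

End MaximalModularLeftIdeal.

Lemma jacobson_radical_of_left_quasi_invertible c :
  (forall x, left_quasi_invertible (mul x c)) -> jacobson_radical mul c.
Proof.
move=> lqi L [[idealL [u modular_u]] properL maximalL].
exact: (mem_of_left_quasi_invertible idealL modular_u properL maximalL).
Qed.

Lemma left_multiplier_range_jacobson_radical T :
  left_multiplier mul T -> (forall b, quasi_invertible mul (T b)) ->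
  range T `<=` jacobson_radical mul.
Proof.
move=> [_ _ TM] qiT _ [a _ <-].
apply: jacobson_radical_of_left_quasi_invertible => x.
by apply: quasi_invertible_mul_swap; rewrite -TM.
Qed.

Lemma spectrally_infinitesimal_of_range_rann T :
  range T `<=` rann mul -> spectrally_infinitesimal mul T.
Proof. by move=> Trann a; apply: spectral_radius_square0; apply: Trann; exists a. Qed.

End ComplexAlgebra.

Theorem theorem5p6 (R : realType) (V : completeNormedModType R[i])
  (mul : V -> V -> V) (hA : banach_algebra_mul mul)
  (hrad : jacobson_radical mul = rann mul)
  (hcomm : quotient_by_rad_commutative mul)
  (T : V -> V) (hT : left_multiplier mul T) :
  (range T `<=` jacobson_radical mul) <-> spectrally_infinitesimal mul T.
Proof.
have [[mulA mulDl mulDr mulZl mulZr] _] := hA.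
split=> [Trad | Tsi].
- by rewrite hrad in Trad; apply: spectrally_infinitesimal_of_range_rann.
- apply: left_multiplier_range_jacobson_radical => // b.
  exact/quasi_invertible_of_spectral_radius0/Tsi.
Qed.
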